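(* For every integer $k \geq 2$ there exists a $\chi_\rho$-critical tree $T$ with $\chi_{\rho}(T)=k$.
   Context: A $k$-packing coloring of a graph $G$ is a map $c:V(G)\to\{1,\ldots,k\}$ such that two distinct vertices $u,v$ with $c(u)=c(v)=i$ satisfy $d_G(u,v)>i$; $\chi_\rho(G)$ is the smallest $k$ for which such a coloring exists. $G$ is $\chi_\rho$-critical if $\chi_\rho(H)<\chi_\rho(G)$ for every proper subgraph $H$ of $G$. *)

(* Finite simple graphs: a symmetric irreflexive relation
   e : rel T on a finType T. *)
From mathcomp Require Import all_boot.
Set Implicit Arguments. Unset Strict Implicit. Unset Printing Implicit Defensive.

Section Graphs.
Variable T : finType.

Definition subgraph (e : rel T) (S : {set T}) (f : rel T) : Prop :=
  symmetric f /\ (forall x y, f x y -> [&& x \in S, y \in S & e x y]).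

Definition proper_subgraph (e : rel T) (S : {set T}) (f : rel T) : Prop :=
  subgraph e S f /\ (S != setT \/ exists x y, e x y && ~~ f x y).

Definition dist_le (f : rel T) (n : nat) (u v : T) : Prop :=
  exists s : seq T, size s <= n /\ path f u s /\ last u s = v.

(* c is a k-packing coloring of the graph (S, f). The condition
   d(u,v) > i is expressed as "not d(u,v) <= i" (distance is +oo for
   vertices in different components). *)
Definition packing_coloring (S : {set T}) (f : rel T) (k : nat) (c : T -> nat) : Prop :=
  (forall x, x \in S -> 1 <= c x <= k) /\
  (forall u v, u \in S -> v \in S -> u != v -> c u = c v -> ~ dist_le f (c u) u v).

Definition packing_colorable (S : {set T}) (f : rel T) (k : nat) : Prop :=
  exists c : T -> nat, packing_coloring S f k c.

Definition chi_rho_eq (S : {set T}) (f : rel T) (k : nat) : Prop :=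
  packing_colorable S f k /\ (forall j, j < k -> ~ packing_colorable S f j).

Definition chi_rho_critical (e : rel T) : Prop :=
  forall (S : {set T}) (f : rel T), proper_subgraph e S f ->
    forall j k, chi_rho_eq S f j -> chi_rho_eq setT e k -> j < k.

Definition acyclic (e : rel T) : Prop :=
  forall c : seq T, uniq c -> 2 < size c -> ~~ cycle e c.

Definition is_tree (e : rel T) : Prop :=
  symmetric e /\ irreflexive e /\ 0 < #|T| /\
  (forall x y, connect e x y) /\ acyclic e.

End Graphs.

From mathcomp Require Import all_boot.
From Stdlib Require Import Classical.
From mathcomp Require Import zify.
Set Implicit Arguments. Unset Strict Implicit. Unset Printing Implicit Defensive.

(* The complete (k-1)-ary tree of depth two has no packing colouring with k-1
   colours: a child of the root coloured 1 would force its k-1 children, pairwise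
   at distance 2, to take distinct colours in {2, ..., k-1}; so all children of
   the root, again pairwise at distance 2, would need distinct colours in
   {2, ..., k-1}.  A subgraph with the fewest vertices plus edges that still needs
   more than k-1 colours is the required tree.  It is acyclic; it is connected,
   since components can be coloured independently; every proper subgraph is
   (k-1)-colourable by minimality; and it needs exactly k colours, because it has
   a leaf, deleting a leaf changes no distance between the remaining vertices,
   and the leaf can then receive the new colour k. *)

Lemma card_inj_interval (A : finType) (h : A -> nat) lo hi :
  injective h -> (forall a, lo <= h a < hi) -> #|A| <= hi - lo.
Proof.
move=> h_inj h_range; rewrite cardE -(size_map h) -(size_iota lo (hi - lo)).
apply: uniq_leq_size; first by rewrite (map_inj_uniq h_inj) enum_uniq.
by move=> _ /mapP[a _ ->]; rewrite mem_iota; have := h_range a; lia.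
Qed.

Section PackingColorings.
Variable T : finType.
Implicit Types (S : {set T}) (f : rel T).

Lemma dist_le_refl f n v : dist_le f n v v.
Proof. by exists [::]. Qed.

Lemma dist_le_cons f n u w v : f u w -> dist_le f n w v -> dist_le f n.+1 u v.
Proof. by move=> fuw [s [hs [hp hl]]]; exists (w :: s); rewrite /= fuw. Qed.

Lemma dist_le_mono f n n' u v : n <= n' -> dist_le f n u v -> dist_le f n' u v.
Proof. by move=> le_nn' [s [hs hp]]; exists s; split=> //; apply: leq_trans le_nn'. Qed.

Lemma packing_colorable_mono S f j k :
  j <= k -> packing_colorable S f j -> packing_colorable S f k.
Proof.
move=> le_jk [c [c_range c_pack]]; exists c; split=> // x /c_range /andP[-> cx].
exact: leq_trans le_jk.
Qed.

Lemma chi_rho_eqS S f j :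
  packing_colorable S f j.+1 -> ~ packing_colorable S f j -> chi_rho_eq S f j.+1.
Proof.
move=> col ncol; split=> // i lt_ij col_i; apply: ncol.
by apply: packing_colorable_mono col_i; rewrite -ltnS.
Qed.

Lemma chi_rho_eq_le S f i j : chi_rho_eq S f i -> packing_colorable S f j -> i <= j.
Proof. by move=> [_ min_i] col_j; rewrite leqNgt; apply/negP => /min_i. Qed.

Lemma chi_rho_eq_uniq S f i j : chi_rho_eq S f i -> chi_rho_eq S f j -> i = j.
Proof.
move=> chi_i chi_j; apply/eqP; rewrite eqn_leq.
by rewrite (chi_rho_eq_le chi_i chi_j.1) (chi_rho_eq_le chi_j chi_i.1).
Qed.

Lemma packing_coloring_neq S f k c n u v :
  packing_coloring S f k c -> u \in S -> v \in S -> u != v ->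
  n <= c u -> dist_le f n u v -> c u != c v.
Proof.
move=> [_ c_pack] uS vS uv le_n duv; apply/eqP => cuv.
exact: c_pack uS vS uv cuv (dist_le_mono le_n duv).
Qed.

Lemma card_close_colored_gt1 S f k c (I : finType) (v : I -> T) :
  packing_coloring S f k c -> injective v -> (forall i, v i \in S) ->
  (forall i i', i != i' -> dist_le f 2 (v i) (v i')) -> (forall i, 1 < c (v i)) ->
  #|I| <= k.-1.
Proof.
move=> hc v_inj vS v_close c_gt1.
have -> : k.-1 = k.+1 - 2 by lia.
apply: (@card_inj_interval _ (fun i => c (v i))) => [i i' cii'|i].
  apply/eqP; apply: contraT => ii'.
  have vii' : v i != v i' by rewrite (inj_eq v_inj).
  have := packing_coloring_neq hc (vS i) (vS i') vii' (c_gt1 i) (v_close _ _ ii').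
  by rewrite cii' eqxx.
by have := hc.1 _ (vS i); have := c_gt1 i; lia.
Qed.

End PackingColorings.

Section InducedSubgraphs.
Variables (T : finType) (g : rel T).
Hypothesis g_sym : symmetric g.
Implicit Types S : {set T}.

Definition induced S : rel T := [rel a b | [&& g a b, a \in S & b \in S]].

Lemma induced_subgraph S : subgraph g S (induced S).
Proof.
split=> [a b|a b /and3P[gab aS bS]]; last by rewrite aS bS gab.
rewrite /induced /= g_sym; by case: (a \in S); case: (b \in S); rewrite ?andbF.
Qed.

Lemma proper_induced S : S != setT -> proper_subgraph g S (induced S).
Proof. by split; [exact: induced_subgraph | left]. Qed.

Lemma path_closed S u s :
  closed g S -> u \in S -> path g u s -> path (induced S) u s /\ last u s \in S.
Proof.
move=> clS; elim: s u => [|y s IH] u uS //= /andP[guy p].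
have yS : y \in S by rewrite -(clS _ _ guy).
by have [-> ->] := IH y yS p; rewrite /induced /= guy uS yS.
Qed.

Lemma packing_colorable_closed S k :
  closed g S -> packing_colorable S (induced S) k ->
  packing_colorable (~: S) (induced (~: S)) k -> packing_colorable setT g k.
Proof.
move=> clS [c [c_range c_pack]] [c' [c'_range c'_pack]].
have clCS : closed g (~: S) by move=> a b /clS; rewrite !inE => ->.
exists (fun z => if z \in S then c z else c' z); split=> [z _|u v _ _ uv].
  by case: ifPn => zS; [apply: c_range | apply: c'_range; rewrite inE].
case: ifPn => uS eqc [s [hs [p hl]]].
  have [p' vS] := path_closed clS uS p; rewrite hl in vS; rewrite vS in eqc.
  by apply: c_pack uS vS uv eqc _; exists s.
have uCS : u \in ~: S by rewrite inE.
have [p' vCS] := path_closed clCS uCS p; rewrite hl in vCS.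
move: (vCS); rewrite inE => /negbTE vS; rewrite vS in eqc.
by apply: c'_pack uCS vCS uv eqc _; exists s.
Qed.

End InducedSubgraphs.

Section Pendant.
Variables (T : finType) (g : rel T).
Hypotheses (g_sym : symmetric g) (g_irr : irreflexive g).

Definition pendant (x w : T) : Prop := forall y, g x y = (y == w).

(* A walk through the pendant vertex x arrives from w and returns to w at once,
   so that detour can be cut out. *)
Lemma dist_le_avoid_pendant x w n u v :
  pendant x w -> u != x -> v != x -> dist_le g n u v ->
  dist_le (induced g [set~ x]) n u v.
Proof.
move=> xw; elim: n u => [|n IH] u ux vx [[|y s] [hs [/= p hl]]] //.
1,2: by rewrite -hl; apply: dist_le_refl.
case/andP: p => guy p; case: (eqVneq y x) => [yx | yx].
  subst y; have uw : u = w by apply/eqP; rewrite -xw g_sym.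
  case: s hs p hl => [|z s] hs; first by move=> _ /= hl; rewrite hl eqxx in vx.
  case/andP; rewrite xw => /eqP -> p hl; rewrite -uw in p hl.
  apply: dist_le_mono (IH u ux vx _) => //; exists s; split=> //.
  by move: hs => /=; lia.
apply: dist_le_cons (IH y yx vx _); first by rewrite /induced /= guy !in_setC1 ux yx.
by exists s.
Qed.

Lemma packing_colorable_pendant x w k :
  pendant x w -> packing_colorable [set~ x] (induced g [set~ x]) k ->
  packing_colorable setT g k.+1.
Proof.
move=> xw [c [c_range c_pack]].
have c_range' z : z != x -> 1 <= c z <= k by move=> zx; apply: c_range; rewrite in_setC1.
exists (fun z => if z == x then k.+1 else c z); split=> [z _|u v _ _ uv].
  by case: eqVneq => [_|/c_range']; lia.
case: (eqVneq u x) => [ux|ux]; case: (eqVneq v x) => [vx|vx].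
- by rewrite ux vx eqxx in uv.
- by have := c_range' v vx; lia.
- by have := c_range' u ux; lia.
move=> eqc /(dist_le_avoid_pendant xw ux vx).
by apply: c_pack; rewrite ?in_setC1.
Qed.

Lemma acyclic_head_neighbour x w t y :
  acyclic g -> uniq (x :: w :: t) -> path g x (w :: t) -> g x y -> y != w ->
  y \notin x :: w :: t.
Proof.
move=> acyc uq p gxy yw.
have yx : y != x by apply: contraTneq gxy => ->; rewrite g_irr.
rewrite !inE !negb_or yx yw /=; apply/negP => yt.
case/splitPr: yt uq p => t1 t2; rewrite -cat_rcons => uq p.
have uq' : uniq (x :: w :: rcons t1 y).
  by move: uq; rewrite -!cat_cons cat_uniq => /andP[].
apply: (negP (acyc _ uq' _)); first by rewrite /= size_rcons.
move: p; rewrite -cat_cons cat_path => /andP[/= /andP[gxw p] _].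
by rewrite /= gxw rcons_path p last_rcons g_sym.
Qed.

Lemma acyclic_pendant a b : acyclic g -> g a b -> exists x w, pendant x w.
Proof.
move=> acyc gab; apply: NNPP => no_pendant.
have long_path n : exists x w t, [/\ uniq (x :: w :: t), path g x (w :: t) & size t = n].
  elim: n => [|n [x [w [t [uq p st]]]]].
    exists a, b, [::]; rewrite /= gab inE andbT; split=> //.
    by apply: contraTneq gab => ->; rewrite g_irr.
  have [y gxy yw] : exists2 y, g x y & y != w.
    apply: NNPP => none; apply: no_pendant; exists x, w => y.
    apply/idP/eqP => [gxy|->]; last by case/andP: p.
    by apply/eqP/negPn/negP => yw; apply: none; exists y.
  exists y, x, (w :: t); split=> //=; last by rewrite st.
    by rewrite acyclic_head_neighbour.
  by rewrite g_sym gxy.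
have [x [w [t [/card_uniqP uq _ st]]]] := long_path #|T|.
by have := max_card (mem (x :: w :: t)); rewrite uq /= st ltnNge leqW.
Qed.

End Pendant.

Section MinimalNoncolorable.
Variables (T : finType) (g : rel T) (j : nat).
Hypotheses (g_sym : symmetric g) (g_irr : irreflexive g) (g_acyc : acyclic g).
Hypotheses (j_gt0 : 0 < j) (g_noncol : ~ packing_colorable setT g j).
Hypothesis g_min : forall S f, proper_subgraph g S f -> packing_colorable S f j.

Lemma minimal_has_edge : exists a b, g a b.
Proof.
apply: NNPP => no_edge; apply: g_noncol; apply: packing_colorable_mono j_gt0 _.
exists (fun=> 1); split=> // u v _ _ uv _ [[|y s] [hs [/= p hl]]].
  by rewrite hl eqxx in uv.
by case/andP: p => guy _; apply: no_edge; exists u, y.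
Qed.

Lemma minimal_colorable : packing_colorable setT g j.+1.
Proof.
have [a [b gab]] := minimal_has_edge.
have [x [w xw]] := acyclic_pendant g_sym g_irr g_acyc gab.
apply: (packing_colorable_pendant g_sym xw); apply: g_min.
by apply: (proper_induced g_sym); apply/eqP => /setP /(_ x); rewrite !inE eqxx.
Qed.

Lemma minimal_connected x y : connect g x y.
Proof.
apply: contraT => not_xy; case: g_noncol.
pose C := [set z | connect g x z].
have clC : closed g C.
  by move=> a b gab; rewrite !inE; exact: (connect_closed (sym_connect_sym g_sym) x gab).
apply: (packing_colorable_closed clC); apply: g_min; apply: (proper_induced g_sym).
  by apply/eqP => /setP /(_ y); rewrite !inE (negbTE not_xy).
by apply/eqP => /setP /(_ x); rewrite !inE connect0.
Qed.

Lemma minimal_is_tree : is_tree g.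
Proof.
have [a [b gab]] := minimal_has_edge.
do !split=> //; first by apply/card_gt0P; exists a.
exact: minimal_connected.
Qed.

Lemma minimal_chi_rho : chi_rho_eq setT g j.+1.
Proof. exact: chi_rho_eqS minimal_colorable g_noncol. Qed.

Lemma minimal_critical : chi_rho_critical g.
Proof.
move=> S f Sf i k chi_i chi_k; rewrite -(chi_rho_eq_uniq minimal_chi_rho chi_k) ltnS.
exact: chi_rho_eq_le chi_i (g_min Sf).
Qed.

End MinimalNoncolorable.

Definition forest (T : finType) (g : rel T) : Prop :=
  [/\ symmetric g, irreflexive g & acyclic g].

Definition graph_size (T : finType) (g : rel T) : nat :=
  #|T| + #|[set p : T * T | g p.1 p.2]|.

Section SubtypeGraph.
Variables (T : finType) (S : {set T}) (f : rel T).

Definition subtype_rel : rel {x | x \in S} := fun a b => f (val a) (val b).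

Hypothesis f_on_S : forall a b, f a b -> (a \in S) && (b \in S).

Lemma path_subtype_rel u (uS : u \in S) s :
  path f u s -> exists2 s', map val s' = s & path subtype_rel (Sub u uS) s'.
Proof.
elim: s u uS => [|y s IH] u uS /=; first by exists [::].
case/andP=> fuy p; have /andP[_ yS] := f_on_S fuy.
have [s' <- p'] := IH y yS p.
by exists (Sub y yS :: s') => //=; rewrite p' andbT.
Qed.

Lemma packing_colorable_subtype_rel k :
  packing_colorable setT subtype_rel k -> packing_colorable S f k.
Proof.
move=> [c [c_range c_pack]].
exists (fun x => if insub x is Some x' then c x' else 1).
have c_Sub x (xS : x \in S) : (if insub x is Some x' then c x' else 1) = c (Sub x xS).
  by rewrite insubT.
split=> [x xS|u v uS vS uv]; rewrite !c_Sub; first exact: c_range.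
move=> cuv [s [hs [p hl]]]; have [s' s's p'] := path_subtype_rel uS p.
apply: (c_pack (Sub u uS) (Sub v vS)) => //.
exists s'; split; first by rewrite -(size_map val) s's.
split=> //; apply: val_inj; by rewrite -last_map s's !SubK.
Qed.

End SubtypeGraph.

Arguments subtype_rel {T} S f.

Lemma forest_subtype_rel (T : finType) (g : rel T) S f :
  subgraph g S f -> forest g -> forest (subtype_rel S f).
Proof.
move=> [f_sym f_sub] [g_sym g_irr g_acyc].
have fg a b : f a b -> g a b by case/f_sub/and3P.
split=> [a b|a|c c_uniq c_size]; first exact: f_sym.
  by apply/negP => /fg; rewrite g_irr.
apply/negP => c_cycle; apply: (negP (g_acyc (map val c) _ _)).
- by rewrite (map_inj_uniq val_inj).
- by rewrite size_map.
by rewrite cycle_map; apply: sub_cycle c_cycle => a b /fg.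
Qed.

Lemma graph_size_subtype_rel (T : finType) (g : rel T) S f :
  proper_subgraph g S f -> graph_size (subtype_rel S f) < graph_size g.
Proof.
move=> [[_ f_sub] proper].
have fg a b : f a b -> g a b by case/f_sub/and3P.
have card_sub : #|{: {x : T | x \in S}}| = #|S|.
  by rewrite card_sig; apply: eq_card => x; rewrite inE.
have edges_sub : #|[set p : {x | x \in S} * {x | x \in S} | subtype_rel S f p.1 p.2]|
                 <= #|[set p : T * T | f p.1 p.2]|.
  pose vals (p : {x | x \in S} * {x | x \in S}) := (val p.1, val p.2).
  have vals_inj : injective vals by move=> [a b] [a' b'] [/val_inj -> /val_inj ->].
  rewrite -(card_imset _ vals_inj); apply/subset_leq_card/subsetP => q.
  by case/imsetP => p; rewrite inE => fp ->; rewrite inE.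
have edges_fg : [set p : T * T | f p.1 p.2] \subset [set p : T * T | g p.1 p.2].
  by apply/subsetP => p; rewrite !inE => /fg.
rewrite /graph_size card_sub; case: proper => [S_proper | [x [y /andP[gxy not_fxy]]]].
  move: S_proper; rewrite -properT => /proper_card; rewrite cardsT => S_lt.
  by rewrite -addSn leq_add // (leq_trans edges_sub (subset_leq_card edges_fg)).
have : [set p : T * T | f p.1 p.2] \proper [set p : T * T | g p.1 p.2].
  by apply/properP; split=> //; exists (x, y); rewrite inE.
move/proper_card => f_lt; rewrite -addnS leq_add ?max_card //.
exact: leq_ltn_trans edges_sub f_lt.
Qed.

Lemma exists_minimal_noncolorable j (T : finType) (g : rel T) :
  forest g -> ~ packing_colorable setT g j ->
  exists (T' : finType) (g' : rel T'),
    [/\ forest g', ~ packing_colorable setT g' j &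
        forall S f, proper_subgraph g' S f -> packing_colorable S f j].
Proof.
have [n] := ubnP (graph_size g); elim: n => // n IH in T g *.
rewrite ltnS => g_size g_forest g_noncol.
case: (classic (forall S f, proper_subgraph g S f -> packing_colorable S f j)).
  by exists T, g.
move=> /not_all_ex_not[S] /not_all_ex_not[f] not_Sf.
have [Sf S_noncol] := imply_to_and _ _ not_Sf.
apply: (IH _ (subtype_rel S f)).
- exact: leq_trans (graph_size_subtype_rel Sf) g_size.
- exact: forest_subtype_rel Sf.1 g_forest.
apply: contra_not S_noncol; apply: packing_colorable_subtype_rel.
by move=> a b /Sf.1.2 /and3P[-> ->].
Qed.

Section ParentGraph.
Variables (T : finType) (parent : T -> option T) (depth : T -> nat).
Hypothesis depth_parent : forall x y, parent x = Some y -> depth x = (depth y).+1.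

Definition parent_rel : rel T := [rel a b | (parent a == Some b) || (parent b == Some a)].

Lemma parent_rel_depth a b : parent_rel a b -> depth b <= depth a -> parent a = Some b.
Proof. by case/orP=> /eqP // /depth_parent ->; rewrite ltnn. Qed.

Lemma forest_parent_rel : forest parent_rel.
Proof.
split=> [a b|a|c0]; first by rewrite /parent_rel /= orbC.
  by apply/negP => /parent_rel_depth /(_ (leqnn _)) /depth_parent; lia.
case: c0 => [|x0 c1] // c_uniq c_size; apply/negP => c_cycle.
have [x x_in x_max] := @arg_maxnP _ x0 (mem (x0 :: c1)) depth (mem_head _ _).
have [i s rot_c] := rot_to x_in.
have : [&& 2 < size (x :: s), cycle parent_rel (x :: s) & uniq (x :: s)].
  by rewrite -rot_c rot_cycle rot_uniq size_rot c_cycle c_uniq c_size.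
have s_max z : z \in x :: s -> depth z <= depth x by rewrite -rot_c mem_rot => /x_max.
case: s {rot_c} s_max => [|y [|z t]] s_max /and3P[//= _].
case/and3P=> xy _; rewrite rcons_path => /andP[_ lx] /and4P[_ y_zt _ _].
have y_in : y \in [:: x, y, z & t] by rewrite !inE eqxx orbT.
have l_in : last z t \in [:: x, y, z & t] by rewrite inE [_ \in y :: _]inE mem_last !orbT.
have xl : parent_rel x (last z t) by rewrite /parent_rel /= orbC.
have := parent_rel_depth xl (s_max _ l_in); rewrite (parent_rel_depth xy (s_max _ y_in)).
by case=> y_l; rewrite y_l mem_last in y_zt.
Qed.

End ParentGraph.

Section DepthTwoTree.
Variable m : nat.

Definition vertex : finType := option ('I_m * option 'I_m).

Definition root : vertex := None.
Definition child (i : 'I_m) : vertex := Some (i, None).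
Definition grandchild (i l : 'I_m) : vertex := Some (i, Some l).

Definition parent (v : vertex) : option vertex :=
  match v with
  | None => None
  | Some (_, None) => Some root
  | Some (i, Some _) => Some (child i)
  end.

Definition depth (v : vertex) : nat :=
  match v with None => 0 | Some (_, None) => 1 | Some (_, Some _) => 2 end.

Definition tree_rel : rel vertex := parent_rel parent.

Lemma depth_parent v w : parent v = Some w -> depth v = (depth w).+1.
Proof. by case: v => [[i [l|]]|] //= [<-]. Qed.

Lemma forest_tree_rel : forest tree_rel.
Proof. exact: forest_parent_rel depth_parent. Qed.

Lemma tree_rel_not_colorable : 0 < m -> ~ packing_colorable setT tree_rel m.
Proof.
move=> m_gt0 [c hc].
have c_gt0 v : 0 < c v by have /andP[] := hc.1 v (in_setT v).
have edge_child i : tree_rel (child i) root by [].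
have edge_grandchild i l : tree_rel (grandchild i l) (child i).
  by rewrite /tree_rel /parent_rel /= eqxx.
have [tree_sym _ _] := forest_tree_rel.
have close u w v : tree_rel u w -> tree_rel v w -> dist_le tree_rel 2 u v.
  move=> uw vw; apply: dist_le_cons uw (dist_le_cons _ (dist_le_refl _ _ _)).
  by rewrite tree_sym.
have child_gt1 i : 1 < c (child i).
  rewrite ltn_neqAle c_gt0 andbT; apply/eqP => c_child.
  suff : #|'I_m| <= m.-1 by rewrite card_ord; lia.
  apply: (card_close_colored_gt1 (v := grandchild i) hc) => [l l' [->] //|l|l l' _|l].
  - exact: in_setT.
  - exact: close (edge_grandchild i l) (edge_grandchild i l').
  rewrite ltn_neqAle c_gt0 andbT c_child.
  apply: (packing_coloring_neq hc); rewrite ?in_setT //.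
  - by apply/eqP; case.
  by apply: dist_le_cons (dist_le_refl _ _ _); rewrite tree_sym.
suff : #|'I_m| <= m.-1 by rewrite card_ord; lia.
apply: (card_close_colored_gt1 (v := child) hc) => [i i' [->] //|i|i i' _|//].
- exact: in_setT.
- exact: close (edge_child i) (edge_child i').
Qed.

End DepthTwoTree.

Theorem corollary3p6 (k : nat) (hk : 2 <= k) :
  exists (T : finType) (e : rel T),
    is_tree e /\ chi_rho_eq [set: T] e k /\ chi_rho_critical e.
Proof.
case: k hk => [|[|m]] // _.
have [T [e [[e_sym e_irr e_acyc] e_noncol e_min]]] :=
  exists_minimal_noncolorable (forest_tree_rel m.+1) (tree_rel_not_colorable (ltn0Sn m)).
have j_gt0 : 0 < m.+1 := ltn0Sn m.
exists T, e; split; first exact: minimal_is_tree e_sym e_irr e_acyc j_gt0 e_noncol e_min.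
split; first exact: minimal_chi_rho e_sym e_irr e_acyc j_gt0 e_noncol e_min.
exact: minimal_critical e_sym e_irr e_acyc j_gt0 e_noncol e_min.
Qed.
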